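(* Let $q$ be a prime power and $m,n$ positive integers, and set $$\Upsilon(m,n;q)=\frac{\phi(q^{mn}-1)}{mn}\, q^{m(m-1)(n-1)}\prod_{i=1}^{m-1}(q^m-q^i),$$ where $\phi$ is Euler's totient function. Then the number of primitive $\sigma$-LFSRs of order $n$ over $\mathbb{F}_{q^m}$ equals $\Upsilon(m,n;q)$ if and only if $$\left|\left\{T\in \mathrm{BCM}(m,n;q)\cap \mathrm{GL}_{mn}(\mathbb{F}_q) : o(T)=q^{mn}-1\right\}\right| = \Upsilon(m,n;q),$$ where $o(T)$ denotes the order of $T$ in the group $\mathrm{GL}_{mn}(\mathbb{F}_q)$.
   Context: Fix an $\mathbb{F}_q$-basis $\{\alpha_0,\dots,\alpha_{m-1}\}$ of $\mathbb{F}_{q^m}$ and, for $s\in\mathbb{F}_{q^m}$, let $\mathbf{s}\in\mathbb{F}_q^m$ (a row vector) be its coordinate vector. A $\sigma$-LFSR of order $n$ over $\mathbb{F}_{q^m}$ is given by an $n$-tuple $(C_0,\dots,C_{n-1})$ of $m\times m$ matrices over $\mathbb{F}_q$; given an initial state $(s_0,\dots,s_{n-1})\in\mathbb{F}_{q^m}^n$ it generates the sequence $(s_0,s_1,\dots)$ in $\mathbb{F}_{q^m}$ defined by $\mathbf{s}_{i+n}=\mathbf{s}_iC_0+\mathbf{s}_{i+1}C_1+\cdots+\mathbf{s}_{i+n-1}C_{n-1}$ for $i\ge 0$. A sequence $(s_j)$ is periodic with period $r$ if $r$ is the least positive integer with $s_{j+r}=s_j$ for all $j\ge 0$. The $\sigma$-LFSR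 is primitive if for every nonzero initial state the generated sequence is periodic with period $q^{mn}-1$. Two $\sigma$-LFSRs are counted as distinct when their coefficient tuples $(C_0,\dots,C_{n-1})$ differ. An $(m,n)$-block companion matrix over $\mathbb{F}_q$ is an $mn\times mn$ matrix, written in $n\times n$ blocks of size $m\times m$, whose last block column is $(C_0,C_1,\dots,C_{n-1})^{T}$ for some $C_0,\dots,C_{n-1}\in M_m(\mathbb{F}_q)$, whose block in position $(i+1,i)$ is the identity $I_m$ for $i=1,\dots,n-1$, and all of whose other blocks are zero; $\mathrm{BCM}(m,n;q)$ denotes the set of all such matrices. *)

From HB Require Import structures.
From mathcomp Require Import all_boot all_order all_algebra all_field.
From mathcomp Require Import boolp.
Set Implicit Arguments. Unset Strict Implicit. Unset Printing Implicit Defensive.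
Import GRing.Theory.
Local Open Scope ring_scope.

Section Defs.
Variable F : finFieldType.

(* An element of F_{q^m} is represented by its coordinate row vector in
   'rV[F]_m w.r.t. the fixed basis; a sigma-LFSR of order n is a family
   C : 'I_n -> 'M[F]_m of m x m matrices. *)

Fixpoint lfsr_prefix (m n : nat) (C : 'I_n -> 'M[F]_m) (init : 'I_n -> 'rV[F]_m)
    (N : nat) : seq 'rV[F]_m :=
  match N with
  | 0 => [::]
  | N'.+1 =>
      let p := lfsr_prefix C init N' in
      rcons p (if (insub N' : option 'I_n) is Some i then init i
               else \sum_(k < n) nth 0 p (N' - n + k)%N *m C k)
  end.

Definition lfsr_seq (m n : nat) (C : 'I_n -> 'M[F]_m) (init : 'I_n -> 'rV[F]_m)
    (j : nat) : 'rV[F]_m :=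
  nth 0 (lfsr_prefix C init j.+1) j.

Definition seq_period (T : Type) (s : nat -> T) (r : nat) : Prop :=
  (0 < r)%N /\ (forall j, s (j + r)%N = s j) /\
  (forall r', (0 < r')%N -> (forall j, s (j + r')%N = s j) -> (r <= r')%N).

Definition primitive_lfsr (m n : nat) (C : 'I_n -> 'M[F]_m) : Prop :=
  forall init : 'I_n -> 'rV[F]_m, (exists i, init i != 0) ->
    seq_period (lfsr_seq C init) (#|F| ^ (m * n) - 1)%N.

Lemma blk_idx_proof (m n : nat) (bi : 'I_n) (oi : 'I_m) : (bi * m + oi < n * m)%N.
Proof.
have h1 := ltn_ord oi; have h2 := ltn_ord bi.
apply: (@leq_trans (bi * m + m)); first by rewrite ltn_add2l.
by rewrite -mulSnr leq_mul2r h2 orbT.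
Qed.

Definition blk_idx (m n : nat) (bi : 'I_n) (oi : 'I_m) : 'I_(n * m) :=
  Ordinal (blk_idx_proof bi oi).

Definition bcm_entry (m n : nat) (C : 'I_n -> 'M[F]_m)
    (bi : 'I_n) (oi : 'I_m) (bj : 'I_n) (oj : 'I_m) : F :=
  if val bj == n.-1 then C bi oi oj
  else if val bi == (val bj).+1 then (oi == oj)%:R else 0.

Definition is_bcm (m n : nat) (T : 'M[F]_(n * m)) : bool :=
  [exists C : {ffun 'I_n -> 'M[F]_m},
    [forall bi, forall oi, forall bj, forall oj,
      T (blk_idx bi oi) (blk_idx bj oj) == bcm_entry C bi oi bj oj]].

Definition mx_order_is (N : nat) (T : 'M[F]_N) (k : nat) : bool :=
  [&& (0 < k)%N, T ^+ k == 1%:M & [forall j : 'I_k, (0 < j)%N ==> (T ^+ j != 1%:M)]].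

End Defs.

Definition Upsilon (m n q : nat) : rat :=
  (totient (q ^ (m * n) - 1))%:R / (m * n)%:R
  * (q ^ (m * (m - 1) * (n - 1)))%:R
  * \prod_(1 <= i < m) ((q ^ m)%:R - (q ^ i)%:R).

(* Encode the state (s_j, ..., s_{j+n-1}) of a sigma-LFSR with coefficients C as
   a row vector of length nm: one clock step is right multiplication by the block
   companion matrix T of C, and C |-> T is a bijection onto BCM(m,n;q). So C is
   primitive iff every nonzero row vector has period q^(mn) - 1 under T, and this
   holds iff T has order q^(mn) - 1: the q^(mn) - 1 distinct powers of such a T
   exhaust the nonzero elements of the commutative algebra F_q[T], which has at
   most q^(mn) elements, so T^r - 1 is invertible for 0 < r < q^(mn) - 1 and fixes
   no nonzero vector. *)

From HB Require Import structures.
From mathcomp Require Import all_boot all_order all_algebra all_field.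
From mathcomp Require Import boolp zify.
Set Implicit Arguments. Unset Strict Implicit. Unset Printing Implicit Defensive.
Import GRing.Theory.
Local Open Scope ring_scope.

Section MatrixOrder.
Variables (F : finFieldType) (d : nat).
Implicit Types (T : 'M[F]_d) (v : 'rV[F]_d).

Lemma unitmx_expr T k i : (0 < k)%N -> T ^+ k = 1%:M -> T ^+ i \in unitmx.
Proof.
move=> k_gt0 Tk; apply: (proj1 (@mulmx1_unit _ _ _ (T ^+ (i * k.-1)) _)).
by rewrite mulmxE -exprD -mulnS prednK // mulnC exprM Tk expr1n.
Qed.

Lemma mx_order_expr_inj T k :
  mx_order_is T k -> {in gtn k &, injective (fun i => T ^+ i)}.
Proof.
case/and3P=> k_gt0 /eqP Tk /forallP Tj_neq1 i j; rewrite !inE => ik jk Tij.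
wlog lt_ij : i j ik jk Tij / (i < j)%N.
  by move=> W; case: (ltngtP i j) => // h; [|symmetry]; apply: W.
have jik : (j - i < k)%N by apply: leq_ltn_trans (leq_subr _ _) jk.
have /implyP := Tj_neq1 (Ordinal jik); rewrite /= subn_gt0 lt_ij => /(_ isT).
suff -> : T ^+ (j - i) = 1%:M by rewrite eqxx.
have TiU := unitmx_expr i k_gt0 Tk.
have Tij_eq : T ^+ i *m T ^+ (j - i) = T ^+ i *m 1%:M.
  by rewrite mulmx1 mulmxE -exprD subnKC ?Tij // ltnW.
by rewrite -(mulKmx TiU (T ^+ (j - i))) Tij_eq mulKmx.
Qed.

Lemma orbit_periodicE T v r :
  (forall j, v *m T ^+ (j + r)%N = v *m T ^+ j) <-> v *m T ^+ r = v.
Proof.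
split=> [/(_ 0%N)|vTr j]; first by rewrite add0n expr0 mulmx1.
by rewrite addnC exprD -mulmxE mulmxA vTr.
Qed.

Lemma delta_mx_neq0 (i : 'I_d) : delta_mx 0 i != 0 :> 'rV[F]_d.
Proof.
by apply/eqP => /matrixP/(_ 0 i); rewrite !mxE !eqxx; apply/eqP/oner_neq0.
Qed.

End MatrixOrder.

Section HornerAlgebra.
Variables (F : finFieldType) (d : nat).
Implicit Types T : 'M[F]_d.+1.
Local Notation N := (#|F| ^ d.+1 - 1)%N.

Definition horner_mx_img T :=
  [set horner_mx T (rVpoly u) | u : 'rV[F]_(degree_mxminpoly T)].

Lemma horner_mx_img_mem T p : horner_mx T p \in horner_mx_img T.
Proof.
apply/imsetP; exists (poly_rV (p %% mxminpoly T)) => //.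
rewrite poly_rV_K ?size_mod_mxminpoly // -horner_mxK.
by rewrite mx_inv_hornerK // horner_mx_mem.
Qed.

Lemma card_horner_mx_img T : (#|horner_mx_img T| <= #|F| ^ d.+1)%N.
Proof.
apply: leq_trans (leq_imset_card _ _) _; rewrite card_mx mul1n.
apply: leq_pexp2l; first by apply/card_gt0P; exists 0.
have := dvdp_leq (monic_neq0 (char_poly_monic T)) (mxminpoly_dvd_char T).
by rewrite size_mxminpoly size_char_poly.
Qed.

(* The N distinct powers of T are nonzero elements of F[T], which has at most
   N nonzero elements; hence F[T] is a field generated multiplicatively by T. *)
Lemma mx_order_horner_img T :
  mx_order_is T N -> horner_mx_img T :\ 0 = [set T ^+ i | i : 'I_N].
Proof.
move=> oT; have [N_gt0 /eqP TN _] := and3P oT.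
have card_powers : #|[set T ^+ i | i : 'I_N]| = N.
  rewrite card_imset ?card_ord // => i j /(mx_order_expr_inj oT) eq_ij.
  by apply: val_inj; apply: eq_ij; rewrite inE.
apply/eqP; rewrite eq_sym eqEcard card_powers; apply/andP; split.
  apply/subsetP => _ /imsetP[i _ ->]; rewrite !inE; apply/andP; split.
    apply/eqP => Ti0; have := mulVmx (unitmx_expr i N_gt0 TN).
    by rewrite Ti0 mulmx0 => /esym/eqP; rewrite (negbTE (oner_neq0 _)).
  have -> : T ^+ i = horner_mx T 'X^i by rewrite rmorphXn /= horner_mx_X.
  exact: horner_mx_img_mem.
have := card_horner_mx_img T; rewrite (cardsD1 0).
by rewrite -[in 0 \in _](rmorph0 (horner_mx T)) horner_mx_img_mem add1n; lia.
Qed.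

End HornerAlgebra.

Lemma mx_order_fixed_row (F : finFieldType) d (T : 'M[F]_d) (v : 'rV[F]_d) r :
  mx_order_is T (#|F| ^ d - 1)%N -> (0 < r < #|F| ^ d - 1)%N ->
  v *m T ^+ r = v -> v = 0.
Proof.
case: d T v => [|d] T v oT /andP[r_gt0 rN] vTr; first by rewrite expn0 in rN.
have [N_gt0 /eqP TN /forallP Tj_neq1] := and3P oT.
have : T ^+ r - 1%:M \in horner_mx_img T :\ 0.
  rewrite !inE subr_eq0 (implyP (Tj_neq1 (Ordinal rN))) //=.
  have -> : T ^+ r - 1%:M = horner_mx T ('X^r - 1).
    by rewrite rmorphB rmorphXn /= horner_mx_X (rmorph1 (horner_mx T)).
  exact: horner_mx_img_mem.
rewrite mx_order_horner_img // => /imsetP[e _ Tr1].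
rewrite -[v](mulmxK (unitmx_expr e N_gt0 TN)) -Tr1.
by rewrite mulmxBr mulmx1 vTr subrr mul0mx.
Qed.

Lemma primitive_mxP (F : finFieldType) d (T : 'M[F]_d) : (0 < d)%N ->
  (forall v : 'rV[F]_d, v != 0 -> seq_period (fun j => v *m T ^+ j) (#|F| ^ d - 1)%N)
  <-> (T \in unitmx) && mx_order_is T (#|F| ^ d - 1)%N.
Proof.
move=> d_gt0; split=> [per_orbits|/andP[_ oT] v v_neq0].
  have [N_gt0 [_ minN]] := per_orbits _ (delta_mx_neq0 F (Ordinal d_gt0)).
  have TN : T ^+ (#|F| ^ d - 1)%N = 1%:M.
    apply/row_matrixP => i; rewrite !rowE mulmx1.
    by have [_ [/orbit_periodicE]] := per_orbits _ (delta_mx_neq0 F i).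
  rewrite /mx_order_is (unitmx_expr 1 N_gt0 TN) N_gt0 TN eqxx /=.
  apply/forallP => j; apply/implyP => j_gt0; apply/eqP => Tj.
  have := minN j j_gt0 (proj2 (orbit_periodicE _ _ _) _).
  by rewrite Tj mulmx1 leqNgt ltn_ord => /(_ erefl).
have [N_gt0 /eqP TN _] := and3P oT.
split=> //; split=> [|r r_gt0 /orbit_periodicE vTr].
  by apply/orbit_periodicE; rewrite TN mulmx1.
rewrite leqNgt; apply/negP => rN.
by move/eqP: v_neq0; apply; apply: (mx_order_fixed_row oT _ vTr); rewrite r_gt0.
Qed.

Lemma seq_period_eq (A B : Type) (s : nat -> A) (t : nat -> B) r :
  (forall r, (forall j, s (j + r)%N = s j) <-> (forall j, t (j + r)%N = t j)) ->
  seq_period s r <-> seq_period t r.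
Proof.
move=> st_per; rewrite /seq_period st_per.
by split=> -[r_gt0 [per minr]]; do 2!split=> //; move=> r' r'_gt0 /st_per; apply: minr.
Qed.

Section BlockCompanion.
Variables (F : finFieldType) (m n : nat).
Hypothesis m_gt0 : (0 < m)%N.

Lemma idx_blk_proof (k : 'I_(n * m)) : (k %/ m < n)%N.
Proof. by rewrite ltn_divLR. Qed.

Definition idx_blk (k : 'I_(n * m)) : 'I_n := Ordinal (idx_blk_proof k).
Definition idx_off (k : 'I_(n * m)) : 'I_m := Ordinal (ltn_pmod k m_gt0).

Lemma blk_idxK k : blk_idx (idx_blk k) (idx_off k) = k.
Proof. by apply: val_inj; rewrite /= -divn_eq. Qed.

Lemma idx_blkK b o : idx_blk (blk_idx b o) = b.
Proof. by apply: val_inj; rewrite /= divnMDl // divn_small ?addn0. Qed.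

Lemma idx_offK b o : idx_off (blk_idx b o) = o.
Proof. by apply: val_inj; rewrite /= modnMDl modn_small. Qed.

Lemma big_blk_idx (f : 'I_(n * m) -> F) :
  \sum_k f k = \sum_b \sum_o f (blk_idx b o).
Proof.
rewrite pair_big /= (reindex (fun p : 'I_n * 'I_m => blk_idx p.1 p.2)) //=.
apply: onW_bij; exists (fun k => (idx_blk k, idx_off k)) => [[b o]|k] /=.
  by rewrite idx_blkK idx_offK.
by rewrite blk_idxK.
Qed.

Definition bcmx (C : 'I_n -> 'M[F]_m) : 'M[F]_(n * m) :=
  \matrix_(k, l) bcm_entry C (idx_blk k) (idx_off k) (idx_blk l) (idx_off l).

Lemma bcmxE C b o b' o' :
  bcmx C (blk_idx b o) (blk_idx b' o') = bcm_entry C b o b' o'.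
Proof. by rewrite mxE !idx_blkK !idx_offK. Qed.

Lemma is_bcmP (T : 'M[F]_(n * m)) :
  reflect (exists C : {ffun 'I_n -> 'M[F]_m}, T = bcmx C) (is_bcm T).
Proof.
apply: (iffP existsP) => -[C TC]; exists C; last first.
  by apply/forallP => b; apply/forallP => o; apply/forallP => b'; apply/forallP => o';
    rewrite TC bcmxE.
apply/matrixP => k l; rewrite -(blk_idxK k) -(blk_idxK l) bcmxE.
by move/forallP: TC => /(_ _) /forallP /(_ _) /forallP /(_ _) /forallP /(_ _) /eqP.
Qed.

Lemma bcmx_inj : (0 < n)%N -> injective (fun C : {ffun 'I_n -> 'M[F]_m} => bcmx C).
Proof.
move=> n_gt0 C1 C2 /= eqC; apply/ffunP => b; apply/matrixP => o o'.
have last_blk : (n.-1 < n)%N by rewrite prednK.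
have := congr1 (fun T : 'M[F]_(n * m) =>
  T (blk_idx b o) (blk_idx (Ordinal last_blk) o')) eqC.
by rewrite /= !bcmxE /bcm_entry eqxx.
Qed.

End BlockCompanion.

Section LFSR.
Variables (F : finFieldType) (m n : nat).
Hypotheses (m_gt0 : (0 < m)%N) (n_gt0 : (0 < n)%N).
Variable C : 'I_n -> 'M[F]_m.
Local Notation T := (bcmx m_gt0 C).
Local Notation idx_blk := (idx_blk m_gt0).
Local Notation idx_off := (idx_off m_gt0).

Section Sequence.
Variable init : 'I_n -> 'rV[F]_m.
Local Notation s := (lfsr_seq C init).

Lemma size_lfsr_prefix k : size (lfsr_prefix C init k) = k.
Proof. by elim: k => //= k IHk; rewrite size_rcons IHk. Qed.

Lemma nth_lfsr_prefix k i : (i < k)%N -> nth 0 (lfsr_prefix C init k) i = s i.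
Proof.
elim: k => // k IHk; rewrite ltnS leq_eqVlt => /predU1P[-> //|ik].
by rewrite /= nth_rcons size_lfsr_prefix ik IHk.
Qed.

Lemma lfsr_seq_init (i : 'I_n) : s i = init i.
Proof. by rewrite /lfsr_seq /= nth_rcons size_lfsr_prefix ltnn eqxx valK. Qed.

Lemma lfsr_seq_rec j : s (j + n)%N = \sum_(k < n) s (j + k)%N *m C k.
Proof.
rewrite /lfsr_seq /= nth_rcons size_lfsr_prefix ltnn eqxx insubF; last first.
  by rewrite ltnNge leq_addl.
by apply: eq_bigr => k _; rewrite addnK nth_lfsr_prefix // ltn_add2l.
Qed.

Definition lfsr_state j : 'rV[F]_(n * m) := \row_k s (j + idx_blk k)%N 0 (idx_off k).

Lemma lfsr_stateE j b o : lfsr_state j 0 (blk_idx b o) = s (j + b)%N 0 o.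
Proof. by rewrite mxE idx_blkK idx_offK. Qed.

Lemma lfsr_stateS j : lfsr_state j.+1 = lfsr_state j *m T.
Proof.
apply/rowP => k; rewrite -(blk_idxK m_gt0 k); move: (idx_blk k) (idx_off k) => b o.
rewrite lfsr_stateE mxE (big_blk_idx m_gt0).
under eq_bigr => b' _ do under eq_bigr => o' _ do rewrite lfsr_stateE bcmxE /bcm_entry.
have [b_last|b_not_last] := eqVneq (val b) n.-1.
  rewrite addSnnS b_last prednK // lfsr_seq_rec summxE.
  by apply: eq_bigr => b' _; rewrite mxE.
have bS_lt : (b.+1 < n)%N.
  rewrite ltn_neqAle ltn_ord andbT; apply: contra b_not_last => /eqP bn.
  by rewrite -(congr1 predn bn).
rewrite (bigD1 (Ordinal bS_lt)) //= [X in _ + X]big1 ?addr0; last first.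
  move=> b' b'_neq; apply: big1 => o' _.
  suff /negbTE -> : val b' != b.+1 by rewrite mulr0.
  by apply: contra b'_neq => /eqP eq_b'; apply/eqP/val_inj.
rewrite eqxx (bigD1 o) //= eqxx mulr1 big1 ?addr0 ?addnS //.
by move=> o' /negbTE ->; rewrite mulr0.
Qed.

Lemma lfsr_state_expr j : lfsr_state j = lfsr_state 0 *m T ^+ j.
Proof.
elim: j => [|j IHj]; first by rewrite expr0 mulmx1.
by rewrite lfsr_stateS IHj exprSr -mulmxE mulmxA.
Qed.

Lemma lfsr_seq_periodicE r :
  (forall j, s (j + r)%N = s j) <-> lfsr_state 0 *m T ^+ r = lfsr_state 0.
Proof.
split=> [per|Tr j].
  rewrite -lfsr_state_expr; apply/rowP => k; rewrite -(blk_idxK m_gt0 k).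
  by rewrite !lfsr_stateE addnC per.
have st_per : lfsr_state (j + r)%N = lfsr_state j.
  rewrite (lfsr_state_expr (j + r)%N) (lfsr_state_expr j).
  by rewrite addnC exprD -mulmxE mulmxA Tr.
apply/rowP => o; move/rowP: st_per => /(_ (blk_idx (Ordinal n_gt0) o)).
by rewrite !lfsr_stateE !addn0.
Qed.

Lemma lfsr_seq_period r :
  seq_period s r <-> seq_period (fun j => lfsr_state 0 *m T ^+ j) r.
Proof.
by apply: seq_period_eq => r'; rewrite lfsr_seq_periodicE orbit_periodicE.
Qed.

Lemma lfsr_state0_neq0 : (exists i, init i != 0) -> lfsr_state 0 != 0.
Proof.
case=> i; apply: contra => /eqP state0; apply/eqP/rowP => o.
by rewrite -lfsr_seq_init -[i : nat]add0n -lfsr_stateE state0 !mxE.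
Qed.

End Sequence.

Definition lfsr_init_of (v : 'rV[F]_(n * m)) (b : 'I_n) : 'rV[F]_m :=
  \row_o v 0 (blk_idx b o).

Lemma lfsr_state_init_of v : lfsr_state (lfsr_init_of v) 0 = v.
Proof.
apply/rowP => k; rewrite -(blk_idxK m_gt0 k).
by rewrite lfsr_stateE add0n lfsr_seq_init mxE.
Qed.

Lemma lfsr_init_of_neq0 v : v != 0 -> exists i, lfsr_init_of v i != 0.
Proof.
move=> v_neq0; apply/existsP; apply: contraNT v_neq0 => /existsPn init0.
apply/eqP/rowP => k; rewrite -(blk_idxK m_gt0 k) mxE.
by have /eqP/rowP/(_ (idx_off k)) := negbNE (init0 (idx_blk k)); rewrite !mxE.
Qed.

Lemma primitive_lfsrE :
  primitive_lfsr C <->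
  forall v : 'rV[F]_(n * m), v != 0 ->
    seq_period (fun j => v *m T ^+ j) (#|F| ^ (m * n) - 1)%N.
Proof.
split=> [prim v /lfsr_init_of_neq0 init_neq0|per init init_neq0].
  by have := prim _ init_neq0; rewrite lfsr_seq_period lfsr_state_init_of.
by rewrite lfsr_seq_period; apply/per/lfsr_state0_neq0.
Qed.

Lemma primitive_lfsr_bcmx :
  primitive_lfsr C <->
  (T \in unitmx) && mx_order_is T (#|F| ^ (m * n) - 1)%N.
Proof.
rewrite primitive_lfsrE [(m * n)%N]mulnC.
by apply: primitive_mxP; rewrite muln_gt0 n_gt0.
Qed.

End LFSR.

Theorem theorem5p2 (F : finFieldType) (m n : nat) (hm : (0 < m)%N) (hn : (0 < n)%N) :
  ((#|[set C : {ffun 'I_n -> 'M[F]_m} | `[< primitive_lfsr C >]]|)%:R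
     = Upsilon m n #|F|)
  <->
  ((#|[set T : 'M[F]_(n * m) |
        [&& is_bcm T, T \in unitmx & mx_order_is T (#|F| ^ (m * n) - 1)%N]]|)%:R
     = Upsilon m n #|F|).
Proof.
set prim := [set C | _]; set prim_bcm := [set T | _].
suff -> : prim_bcm = (fun C : {ffun 'I_n -> 'M[F]_m} => bcmx hm C) @: prim.
  by rewrite card_imset //; apply: bcmx_inj.
apply/setP => T; rewrite inE; apply/and3P/imsetP => [[/is_bcmP[C ->] T_unit oT]|[C]].
  by exists C; rewrite // inE; apply/asboolP/primitive_lfsr_bcmx/andP.
rewrite inE => /asboolP/(primitive_lfsr_bcmx hm hn)/andP[T_unit oT] ->.
by split=> //; apply/is_bcmP; exists C.
Qed.
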